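(* Let $G$ be a finite, simple, undirected, connected graph that is $C_4$-free, has order $n$, diameter $d$, and edge-connectivity at least $3$. Then $$d\leq \frac{2n-3}{5}.$$
   Context: A graph is $C_4$-free if it contains no cycle of length four as a (not necessarily induced) subgraph. The edge-connectivity of a connected graph is the minimum number of edges whose removal disconnects it. *)

From mathcomp Require Import all_boot all_order all_algebra.
Set Implicit Arguments. Unset Strict Implicit. Unset Printing Implicit Defensive.

Definition simple_graph (T : finType) (e : rel T) : Prop :=
  symmetric e /\ irreflexive e.

Definition connected_graph (T : finType) (e : rel T) : Prop :=
  forall x y : T, connect e x y.

Definition C4_free (T : finType) (e : rel T) : Prop :=
  forall a b c d : T,
    uniq [:: a; b; c; d] -> ~ [&& e a b, e b c, e c d & e d a].

Definition remove_edges (T : finType) (e : rel T) (F : {set T * T}) : rel T :=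
  fun x y => [&& e x y, (x, y) \notin F & (y, x) \notin F].

(* edge-connectivity >= k: the graph has at least two vertices
   (convention: lambda(K_1) = 0) and deleting fewer than k edges
   never disconnects it. *)
Definition edge_conn_ge (T : finType) (e : rel T) (k : nat) : Prop :=
  1 < #|T| /\
  forall F : {set T * T}, #|F| < k -> forall x y : T, connect (remove_edges e F) x y.

Fixpoint walkb (T : finType) (e : rel T) (k : nat) (x y : T) : bool :=
  match k with
  | 0 => x == y
  | k'.+1 => [exists z, e x z && walkb e k' z y]
  end.

(* distance: least k < #|T| with a walk of length k (correct in a connected
   graph, where every distance is < #|T|) *)
Definition dist (T : finType) (e : rel T) (x y : T) : nat :=
  find (fun k => walkb e k x y) (iota 0 #|T|).

Definition diameter (T : finType) (e : rel T) : nat :=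
  \max_(x : T) \max_(y : T) dist e x y.

From mathcomp Require Import all_boot all_order all_algebra.
From mathcomp Require Import zify lra.
Set Implicit Arguments. Unset Strict Implicit. Unset Printing Implicit Defensive.

(* Let v be an end of a diametral path, D = ecc(v) the diameter, and L_i the set of
   vertices at distance i from v.  Edge-connectivity 3 gives minimum degree 3 and at
   least 3 edges between L_(<=i) and the rest; C4-freeness means that two vertices
   have at most one common neighbour.  Together they constrain the layer sizes
   m_i = |L_i| (record [admissible_profile]): m_0 = 1, m_i m_(i+1) >= 3, a layer of
   size 1 is followed by two non-decreasing sizes other than (3,3) and preceded at
   distance two by a layer of size >= 3, and two consecutive layers of size 2 are
   flanked by layers of total size >= 7.  A potential over windows of three
   consecutive sizes then shows that every such profile has 2 (m_0 + ... + m_D) >= 5D + 3,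
   that is 2n >= 5D + 3. *)

Record admissible_profile (m : nat -> nat) (D : nat) : Prop := AdmissibleProfile {
  profile_head : m 0 = 1;
  profile_gt0 : forall i, i <= D -> 0 < m i;
  profile_mul : forall i, i < D -> 3 <= m i * m i.+1;
  profile_after1 : forall i, i.+2 <= D -> m i = 1 ->
    m i.+1 <= m i.+2 /\ ~ (m i.+1 = 3 /\ m i.+2 = 3);
  profile_before1 : forall i, i.+2 <= D -> m i.+2 = 1 -> 3 <= m i;
  profile_22 : forall i, i.+3 <= D -> m i.+1 = 2 -> m i.+2 = 2 -> 7 <= m i + m i.+3
}.

Lemma admissible_profile_cap m D :
  admissible_profile m D -> admissible_profile (fun i => minn (m i) 6) D.
Proof.
case=> m0 m_gt0 m_mul m_after1 m_before1 m_22; split=> [|i iD|i iD|i iD|i iD|i iD].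
- by rewrite m0.
- by have := m_gt0 i iD; lia.
- have := m_mul i iD; have := m_gt0 i (ltnW iD); have := m_gt0 i.+1 iD; nia.
- move=> m1; have mi1 : m i = 1 by lia.
  by have [] := m_after1 i iD mi1; lia.
- by move=> m1; have := m_before1 i iD; lia.
- move=> m1 m2; have := m_22 i iD; have := m_gt0 i; have := m_gt0 i.+3 iD; lia.
Qed.

(* [potential b c x] bounds from below the slack [2 (m 0 + ... + m k) - 5 k - 3] of an
   admissible profile with values at most 6 whose entries k-2, k-1, k are [b, c, x];
   the value 100 marks triples that never occur.  That it is a lower bound follows
   from its consistency with every admissible window, [potential_step]. *)
Definition potential_table : seq (seq (seq nat)) := [::
  [:: [:: 100; 100; 100; 100; 100; 100]; [:: 100; 100; 100; 100; 100; 100];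
      [:: 100; 100; 100; 3; 5; 7]; [:: 100; 100; 100; 5; 7; 9];
      [:: 100; 100; 100; 100; 9; 11]; [:: 100; 100; 100; 100; 100; 13]];
  [:: [:: 100; 100; 100; 100; 100; 100]; [:: 100; 2; 2; 3; 5; 7];
      [:: 100; 1; 3; 5; 7; 9]; [:: 100; 2; 4; 6; 8; 10];
      [:: 100; 4; 6; 8; 10; 12]; [:: 100; 6; 8; 10; 12; 14]];
  [:: [:: 100; 100; 1; 3; 5; 7]; [:: 100; 0; 2; 4; 6; 8];
      [:: 0; 2; 4; 6; 8; 10]; [:: 0; 2; 4; 6; 8; 10];
      [:: 2; 4; 6; 8; 10; 12]; [:: 4; 6; 8; 10; 12; 14]];
  [:: [:: 100; 100; 1; 3; 5; 7]; [:: 100; 1; 3; 5; 7; 9];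
      [:: 1; 3; 5; 7; 9; 11]; [:: 2; 4; 6; 8; 10; 12];
      [:: 4; 6; 8; 10; 12; 14]; [:: 6; 8; 10; 12; 14; 16]];
  [:: [:: 100; 100; 3; 5; 7; 9]; [:: 100; 3; 5; 7; 9; 11];
      [:: 3; 5; 7; 9; 11; 13]; [:: 5; 7; 9; 11; 13; 15];
      [:: 6; 8; 10; 12; 14; 16]; [:: 8; 10; 12; 14; 16; 18]];
  [:: [:: 100; 100; 5; 7; 9; 11]; [:: 100; 5; 7; 9; 11; 13];
      [:: 5; 7; 9; 11; 13; 15]; [:: 7; 9; 11; 13; 15; 17];
      [:: 9; 11; 13; 15; 17; 19]; [:: 10; 12; 14; 16; 18; 20]]].

Definition potential (b c x : nat) : nat :=
  nth 100 (nth [::] (nth [::] potential_table b.-1) c.-1) x.-1.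

Definition admissible_window (b c x y : nat) : bool :=
  [&& 3 <= x * y, (c == 1) ==> (x <= y) && ((x, y) != (3, 3)),
      (y == 1) ==> (3 <= c) & (c == 2) && (x == 2) ==> (7 <= b + y)].

Definition in_range6 (P : nat -> bool) : bool := all P (iota 1 6).

Lemma in_range6P P n : in_range6 P -> 0 < n <= 6 -> P n.
Proof. by move=> /allP PP n6; apply: PP; rewrite mem_iota; lia. Qed.

Lemma potential_start c x : 0 < c <= 6 -> 0 < x <= 6 -> 3 <= c -> c <= x ->
  ~ (c = 3 /\ x = 3) -> potential 1 c x < 100 /\ potential 1 c x + 13 <= 2 * (1 + c + x).
Proof.
have table : in_range6 (fun c => in_range6 (fun x =>
    [&& 3 <= c, c <= x & (c, x) != (3, 3)] ==>
    (potential 1 c x < 100) && (potential 1 c x + 13 <= 2 * (1 + c + x)))).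
  by vm_compute.
move=> c6 x6 c3 cx cx33; have := in_range6P (in_range6P table c6) x6.
have -> : (c, x) != (3, 3).
  by apply/negP; rewrite xpair_eqE => /andP[/eqP ? /eqP ?]; apply: cx33.
by rewrite c3 cx => /andP.
Qed.

Lemma potential_step b c x y :
    0 < b <= 6 -> 0 < c <= 6 -> 0 < x <= 6 -> 0 < y <= 6 ->
    potential b c x < 100 -> admissible_window b c x y ->
  potential c x y < 100 /\ potential c x y + 5 <= potential b c x + 2 * y.
Proof.
have table : in_range6 (fun b => in_range6 (fun c => in_range6 (fun x =>
    in_range6 (fun y => (potential b c x < 100) ==> admissible_window b c x y ==>
      (potential c x y < 100) && (potential c x y + 5 <= potential b c x + 2 * y))))).
  by vm_compute.
move=> b6 c6 x6 y6 bcx window.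
have := in_range6P (in_range6P (in_range6P (in_range6P table b6) c6) x6) y6.
by rewrite bcx window => /andP.
Qed.

Lemma admissible_profile_window m D i : admissible_profile m D -> i.+3 <= D ->
  admissible_window (m i) (m i.+1) (m i.+2) (m i.+3).
Proof.
case=> _ _ m_mul m_after1 m_before1 m_22 iD; apply/and4P; split.
- exact: m_mul.
- apply/implyP => /eqP m1; have [-> m33] := m_after1 i.+1 iD m1.
  by apply/negP; rewrite xpair_eqE => /andP[/eqP ? /eqP ?]; apply: m33.
- by apply/implyP => /eqP m1; apply: m_before1.
- by apply/implyP => /andP[/eqP m1 /eqP m2]; apply: m_22.
Qed.

Lemma admissible_profile_sum_bounded m D : admissible_profile m D ->
  (forall i, i <= D -> m i <= 6) -> 0 < D -> 5 * D + 3 <= 2 * \sum_(i < D.+1) m i.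
Proof.
case: D => // -[|D] adm m6 _; case: (adm) => m0 m_gt0 m_mul m_after1 _ _.
  by have := m_mul 0 isT; rewrite !big_ord_recr big_ord0 /= m0; lia.
have range i : i <= D.+2 -> 0 < m i <= 6 by move=> iD; rewrite m_gt0 ?m6.
suff slack j : j <= D -> potential (m j) (m j.+1) (m j.+2) < 100 /\
    5 * j.+2 + 3 + potential (m j) (m j.+1) (m j.+2) <= 2 * \sum_(i < j.+3) m i.
  by have [_] := slack D (leqnn D); lia.
elim: j => [|j IHj] jD.
  have m1_ge3 : 3 <= m 1 by have := m_mul 0 isT; rewrite m0 mul1n.
  have [m12 m12_33] := m_after1 0 isT m0.
  have [] := potential_start (range 1 isT) (range 2 isT) m1_ge3 m12 m12_33.
  by rewrite !big_ord_recr big_ord0 /= m0; lia.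
have [IH1 IH2] := IHj (ltnW jD).
have [step1 step2] := potential_step (range j ltac:(lia)) (range j.+1 ltac:(lia))
  (range j.+2 ltac:(lia)) (range j.+3 ltac:(lia)) IH1 (admissible_profile_window adm jD).
split=> //; rewrite big_ord_recr /=; move: IH2 step2.
by set S := \sum_(_ < _) _; lia.
Qed.

Lemma admissible_profile_sum m D : admissible_profile m D -> 0 < D ->
  5 * D + 3 <= 2 * \sum_(i < D.+1) m i.
Proof.
move=> adm D_gt0.
apply: leq_trans (admissible_profile_sum_bounded (admissible_profile_cap adm) _ D_gt0) _.
  by move=> i _; apply: geq_minr.
by rewrite leq_mul2l; apply: leq_sum => i _; apply: geq_minl.
Qed.

Definition nbhd (T : finType) (e : rel T) (x : T) : {set T} := [set y | e x y].

Lemma in_nbhd (T : finType) (e : rel T) x y : (y \in nbhd e x) = e x y.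
Proof. by rewrite inE. Qed.

Section Walks.
Variables (T : finType) (e : rel T).

Lemma walkb_path x p : path e x p -> walkb e (size p) x (last x p).
Proof.
elim: p x => [|y p IHp] x /=; first by rewrite eqxx.
by case/andP=> exy pxy; apply/existsP; exists y; rewrite exy IHp.
Qed.

Lemma dist_le_walkb x y k : walkb e k x y -> dist e x y <= k.
Proof.
move=> wk; rewrite leqNgt; apply/negP => lt_k_dist.
have k_lt_T : k < #|T|.
  by apply: leq_trans lt_k_dist _; rewrite -[X in _ <= X](size_iota 0) find_size.
by have := before_find 0 lt_k_dist; rewrite nth_iota // add0n wk.
Qed.

Hypothesis e_conn : connected_graph e.

Lemma walkb_dist x y : walkb e (dist e x y) x y.
Proof.
have /connectP[p /shortenP[q pq uq _] y_last] := e_conn x y.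
have q_lt_T : size q < #|T|.
  by rewrite -ltnS -[(size q).+1]/(size (x :: q)) -(card_uniqP uq) ltnS max_card.
have has_walk : has (fun k => walkb e k x y) (iota 0 #|T|).
  by apply/hasP; exists (size q); [rewrite mem_iota | rewrite y_last walkb_path].
by have := nth_find 0 has_walk; rewrite nth_iota // -[X in _ < X](size_iota 0) -has_find.
Qed.

Lemma dist_eq0 x y : (dist e x y == 0) = (x == y).
Proof.
apply/eqP/eqP => [d0|->]; first by have := walkb_dist x y; rewrite d0 => /eqP.
by apply/eqP; rewrite -leqn0 dist_le_walkb /=.
Qed.

Hypothesis e_sym : symmetric e.

Lemma dist_edge x y v : e x y -> dist e y v <= (dist e x v).+1.
Proof.
move=> exy; apply: dist_le_walkb; apply/existsP; exists x.
by rewrite e_sym exy; apply: walkb_dist.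
Qed.

Lemma dist_pred x v : 0 < dist e x v -> exists2 z, e x z & dist e z v = (dist e x v).-1.
Proof.
move=> d_gt0; have := walkb_dist x v.
case E: (dist e x v) d_gt0 => [|k] // _ /existsP[z /andP[exz wzk]].
exists z => //; apply/eqP; rewrite eqn_leq dist_le_walkb //=.
by rewrite -ltnS -E dist_edge // e_sym.
Qed.

End Walks.

Section EdgeCuts.
Variables (T : finType) (e : rel T) (k : nat).
Hypothesis e_conn : edge_conn_ge e k.

Lemma edge_conn_cut (S : {set T}) (F : {set T * T}) a b : a \in S -> b \notin S ->
  (forall x y, x \in S -> y \notin S -> e x y -> (x, y) \in F) -> k <= #|F|.
Proof.
move=> aS bS crossF; rewrite leqNgt; apply/negP => F_small.
have /connectP[p] := e_conn.2 F F_small a b.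
elim: p a aS => [|y p IHp] x xS /=; first by move=> _ bx; rewrite bx xS in bS.
case/andP=> /and3P[exy xyF _]; apply: IHp; apply: contraNT xyF => yS.
exact: crossF.
Qed.

Lemma edge_conn_deg x : k <= #|nbhd e x|.
Proof.
have [y yx] : exists y, y != x.
  have /card_gt1P[a [b [_ _ ab]]] := e_conn.1.
  by case: (eqVneq a x) => [<-|]; [exists b; rewrite eq_sym | exists a].
have -> : #|nbhd e x| = #|setX [set x] (nbhd e x)| by rewrite cardsX cards1 mul1n.
apply: (edge_conn_cut (S := [set x]) (a := x) (b := y)); first exact: set11.
  by rewrite in_set1.
by move=> a c /set1P-> _ exc; rewrite in_setX set11 inE.
Qed.

End EdgeCuts.

Section C4Free.
Variables (T : finType) (e : rel T).
Hypotheses (e_sym : symmetric e) (e_irr : irreflexive e) (e_C4 : C4_free e).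

Lemma edge_neq x y : e x y -> x != y.
Proof. by apply: contraTneq => ->; rewrite e_irr. Qed.

Lemma C4_free_common_nbhd x y p q :
  x != y -> e x p -> e y p -> e x q -> e y q -> p = q.
Proof.
move=> xy xp yp xq yq; apply/eqP; apply: contraT => pq.
have py : p != y by rewrite eq_sym edge_neq.
case: (e_C4 (a := x) (b := p) (c := y) (d := q)).
  by rewrite /= !inE !negb_or xy pq py !edge_neq.
by rewrite xp (e_sym p) yp yq (e_sym q) xq.
Qed.

Lemma card3_not_1regular (X : {set T}) :
  #|X| = 3 -> ~ (forall x, x \in X -> #|nbhd e x :&: X| = 1).
Proof.
move=> X3 reg1.
have two_nbrs t u u' : t \in X -> u \in X -> u' \in X -> u != u' -> e t u -> e t u' -> False.
  move=> tX uX u'X uu' tu tu'; suff : 1 < #|nbhd e t :&: X| by rewrite reg1.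
  by apply/card_gt1P; exists u, u'; rewrite !inE tu tu' uX u'X.
have [x xX] : exists x, x \in X by apply/card_gt0P; rewrite X3.
have /eqP/cards1P[y Nx] := reg1 x xX.
have /setIP[/[!inE] exy yX] : y \in nbhd e x :&: X by rewrite Nx set11.
have rest1 : #|X :\: [set x; y]| = 1.
  by rewrite cardsD (setIidPr _) ?cards2 ?edge_neq ?X3 // subUset !sub1set xX.
have [z /[dup] zR /setDP[zX /[!inE] /norP[zx zy]]] : exists z, z \in X :\: [set x; y].
  by apply/card_gt0P; rewrite rest1.
have /eqP/cards1P[t Nz] := reg1 z zX.
have /setIP[/[!inE] ezt tX] : t \in nbhd e z :&: X by rewrite Nz set11.
case: (eqVneq t x) => [tx|tx].
  by apply: (two_nbrs x y z) => //; [rewrite eq_sym | rewrite -tx e_sym].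
case: (eqVneq t y) => [ty|ty].
  by apply: (two_nbrs y x z) => //; [rewrite eq_sym | rewrite e_sym | rewrite -ty e_sym].
have /card_le1_eqP/(_ z t zR) tz : #|X :\: [set x; y]| <= 1 by rewrite rest1.
by move: ezt; rewrite -tz ?e_irr // !inE negb_or tx ty.
Qed.

End C4Free.

Section PrivateNeighbours.
Variables (T : finType) (e : rel T) (X Y : {set T}).
Hypothesis X_nbhd : forall x, x \in X -> exists2 y, y \in Y & e x y.
Hypothesis Y_private :
  forall x x' y, x \in X -> x' \in X -> y \in Y -> e x y -> e x' y -> x = x'.

Let f x := odflt x [pick y in nbhd e x :&: Y].

Let f_nbhd x : x \in X -> f x \in nbhd e x :&: Y.
Proof.
rewrite /f; case: pickP => [//|none] /X_nbhd[y yY exy].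
by have := none y; rewrite !inE exy yY.
Qed.

Let f_inj : {in X &, injective f}.
Proof.
move=> x x' xX x'X fx; have /setIP[/[!inE] exf fY] := f_nbhd xX.
by apply: (Y_private xX x'X fY exf); have /setIP[/[!inE]] := f_nbhd x'X; rewrite fx.
Qed.

Let f_image : f @: X \subset Y.
Proof. by apply/subsetP => _ /imsetP[x xX ->]; have /setIP[] := f_nbhd xX. Qed.

Lemma card_le_private_nbhd : #|X| <= #|Y|.
Proof. by rewrite -(card_in_imset f_inj) subset_leq_card. Qed.

Lemma private_nbhd_uniq x : #|Y| <= #|X| -> x \in X -> #|nbhd e x :&: Y| <= 1.
Proof.
move=> YX xX; have fXY : f @: X = Y.
  by apply/eqP; rewrite eqEcard f_image card_in_imset.
suff nbhd_f y : y \in nbhd e x :&: Y -> y = f x.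
  by apply/card_le1_eqP => y y' /nbhd_f-> /nbhd_f->.
case/setIP=> /[!inE] exy; rewrite -fXY => /imsetP[x' x'X yfx'].
have /setIP[/[!inE] ex'f fY] := f_nbhd x'X.
by rewrite yfx' (Y_private xX x'X fY) // -yfx'.
Qed.

End PrivateNeighbours.

Section Layers.
Variables (T : finType) (e : rel T).
Hypotheses (e_sym : symmetric e) (e_irr : irreflexive e) (e_conn : connected_graph e).
Hypotheses (e_C4 : C4_free e) (e_3conn : edge_conn_ge e 3).
Variables v w : T.
Hypothesis w_far : forall x, dist e x v <= dist e w v.

Local Notation ds x := (dist e x v).
Local Notation D := (dist e w v).

Definition layer i := [set x | ds x == i].

Lemma in_layer i x : (x \in layer i) = (ds x == i).
Proof. by rewrite inE. Qed.

Lemma dist_edge_both x y : e x y -> ds y <= (ds x).+1 /\ ds x <= (ds y).+1.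
Proof. by move=> exy; rewrite !dist_edge // e_sym. Qed.

Lemma dist_v : ds v = 0.
Proof. by apply/eqP; rewrite dist_eq0. Qed.

Lemma layer0 : layer 0 = [set v].
Proof. by apply/setP => x; rewrite in_layer in_set1 dist_eq0. Qed.

Lemma card_layer_gt0 i : i <= D -> 0 < #|layer i|.
Proof.
move=> iD; apply/card_gt0P; rewrite -(subKn iD).
elim: (D - i) (leq_subr i D) => [|k IHk] kD; first by exists w; rewrite in_layer subn0.
have [x /[!in_layer] /eqP dx] := IHk (ltnW kD).
have [|z _ dz] := dist_pred e_conn e_sym (x := x) (v := v); first by rewrite dx subn_gt0.
by exists z; rewrite in_layer dz dx subnS.
Qed.

Lemma sum_card_layer : \sum_(i < D.+1) #|layer i| = #|T|.
Proof.
rewrite -sum1_card (partition_big (fun x => inord (ds x) : 'I_D.+1) xpredT) //=.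
apply: eq_bigr => i _; rewrite -sum1_card; apply: eq_bigl => x.
by rewrite in_layer -val_eqE /= inordK ?ltnS.
Qed.

Definition ball i := [set x | ds x <= i].

Lemma in_ball i x : (x \in ball i) = (ds x <= i).
Proof. by rewrite inE. Qed.

Lemma edge_out_ball x y i : e x y -> x \in ball i -> y \notin ball i ->
  x \in layer i /\ y \in layer i.+1.
Proof.
rewrite !in_ball !in_layer -ltnNge => /dist_edge_both[]; lia.
Qed.

Lemma edge_out_ball_layer x y i : e x y -> x \in layer i.+1 -> y \notin ball i ->
  y \in layer i.+1 \/ y \in layer i.+2.
Proof.
rewrite in_ball !in_layer -ltnNge => /dist_edge_both[] ? ? /eqP ? ?.
by case: (ltngtP (ds y) i.+2) => [?|?|->]; [left | lia | right]; lia.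
Qed.

Lemma layer_cut i (F : {set T * T}) : i < D ->
    (forall x y, x \in layer i -> y \in layer i.+1 -> e x y -> (x, y) \in F) ->
  3 <= #|F|.
Proof.
move=> iD crossF; apply: (edge_conn_cut e_3conn (S := ball i) (a := v) (b := w)).
- by rewrite in_ball dist_v.
- by rewrite in_ball -ltnNge.
move=> x y xi yi exy; have [xL yL] := edge_out_ball exy xi yi; exact: crossF.
Qed.

Lemma card_layer_mul i : i < D -> 3 <= #|layer i| * #|layer i.+1|.
Proof.
by move=> iD; rewrite -cardsX; apply: (layer_cut (i := i)) => // x y xi yi _; apply/setXP.
Qed.

Lemma nbhd_layers x i : ds x = i.+1 ->
  3 <= #|nbhd e x :&: layer i| + #|nbhd e x :&: layer i.+1| + #|nbhd e x :&: layer i.+2|.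
Proof.
move=> dx; apply: leq_trans (edge_conn_deg e_3conn x) _.
have nbhd_sub : nbhd e x \subset
    nbhd e x :&: layer i :|: nbhd e x :&: layer i.+1 :|: nbhd e x :&: layer i.+2.
  apply/subsetP => y /[!inE] exy; have [] := dist_edge_both exy.
  rewrite exy dx /= => dy1 dy2.
  have : ds y = i \/ ds y = i.+1 \/ ds y = i.+2 by lia.
  by case=> [|[]] ->; rewrite eqxx ?orbT.
apply: leq_trans (subset_leq_card nbhd_sub) _.
apply: leq_trans (leq_card_setU _ _) _; rewrite leq_add2r; exact: leq_card_setU.
Qed.

Lemma nbhd_below_ge2 x i : ds x = i.+1 ->
  #|nbhd e x :&: layer i.+1| + #|nbhd e x :&: layer i.+2| <= 1 ->
  2 <= #|nbhd e x :&: layer i|.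
Proof. by move=> /nbhd_layers; lia. Qed.

Lemma nbhd_above_ge2 x i : ds x = i.+1 ->
  #|nbhd e x :&: layer i| + #|nbhd e x :&: layer i.+1| <= 1 ->
  2 <= #|nbhd e x :&: layer i.+2|.
Proof. by move=> /nbhd_layers; lia. Qed.

Lemma layer_neq i j x y : x \in layer i -> y \in layer j -> i != j -> x != y.
Proof. by rewrite !in_layer => /eqP <- /eqP <-; apply: contraNneq => ->. Qed.

Lemma layer_notin x i k : x \in layer i -> i != k -> x \notin layer k.
Proof. by rewrite !in_layer => /eqP->. Qed.

Lemma layer_pred x i : x \in layer i.+1 -> exists2 z, z \in layer i & e x z.
Proof.
rewrite in_layer => /eqP dx; have [|z exz dz] := dist_pred e_conn e_sym (x := x) (v := v).
  by rewrite dx.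
by exists z; rewrite // in_layer dz dx.
Qed.

Let common_nbhd := C4_free_common_nbhd e_sym e_irr e_C4.

Lemma layer_after_single i : i.+2 <= D -> #|layer i| = 1 ->
  #|layer i.+1| <= #|layer i.+2| /\ ~ (#|layer i.+1| = 3 /\ #|layer i.+2| = 3).
Proof.
move=> iD /[dup] Li1 /eqP/cards1P[u Li].
have uL : u \in layer i by rewrite Li set11.
have below x : x \in layer i.+1 -> e x u.
  by case/layer_pred=> z; rewrite Li => /set1P->.
have same_layer x : x \in layer i.+1 -> #|nbhd e x :&: layer i.+1| <= 1.
  move=> xL; apply/card_le1_eqP => y y'; rewrite !in_setI !in_nbhd.
  move=> /andP[xy yL] /andP[xy' y'L].
  apply: (common_nbhd (layer_neq xL uL _)) => //; first by lia.
    by rewrite e_sym below.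
  by rewrite e_sym below.
have layer_below x : #|nbhd e x :&: layer i| <= 1.
  by rewrite -Li1 subset_leq_card ?subsetIr.
have private x x' q : x \in layer i.+1 -> x' \in layer i.+1 -> q \in layer i.+2 ->
    e x q -> e x' q -> x = x'.
  move=> xL x'L qL xq x'q; apply/eqP; apply: contraT => xx'.
  have uq := common_nbhd xx' (below x xL) (below x' x'L) xq x'q.
  by have := layer_neq uL qL; rewrite uq eqxx; apply; lia.
have up x : x \in layer i.+1 -> exists2 q, q \in layer i.+2 & e x q.
  move=> xL; have /card_gt0P[q /setIP[xq qL]] : 0 < #|nbhd e x :&: layer i.+2|.
    have := same_layer x xL; have := layer_below x.
    by move: xL; rewrite in_layer => /eqP /nbhd_layers; lia.
  by exists q; rewrite -?in_nbhd.
split=> [|[L1 L2]]; first exact: card_le_private_nbhd up private.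
(* Otherwise each vertex of [layer i.+1] has exactly one neighbour above it, hence
   exactly one in its own layer: a perfect matching on 3 vertices. *)
apply: (card3_not_1regular e_sym e_irr L1) => x xL.
have := private_nbhd_uniq up private (eq_leq (etrans L2 (esym L1))) xL.
have := same_layer x xL; have := layer_below x.
by move: xL; rewrite in_layer => /eqP /nbhd_layers; lia.
Qed.

Lemma layer_before_single i : i.+2 <= D -> #|layer i.+2| = 1 -> 3 <= #|layer i|.
Proof.
move=> iD /eqP/cards1P[u Li2].
have uL : u \in layer i.+2 by rewrite Li2 set11.
pose P := nbhd e u :&: layer i.+1.
have P3 : 3 <= #|P|.
  have -> : #|P| = #|setX P [set u]| by rewrite cardsX cards1 muln1.
  apply: (layer_cut (i := i.+1)) => // x y xL; rewrite Li2 => /set1P-> xu.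
  by apply/setXP; rewrite set11 in_setI in_nbhd e_sym xu xL.
apply: leq_trans P3 (card_le_private_nbhd (e := e) _ _) => [p /setIP[_]|].
  exact: layer_pred.
move=> p p' z /setIP[up _] /setIP[up' _] zL pz p'z; apply/eqP; apply: contraT => pp'.
rewrite !in_nbhd in up up'; rewrite e_sym in up; rewrite e_sym in up'.
have uz := common_nbhd pp' up up' pz p'z.
by have := layer_neq uL zL; rewrite uz eqxx; apply; lia.
Qed.

Lemma card_nbhd_set1 x y : #|nbhd e x :&: [set y]| = e x y.
Proof.
case: (boolP (e x y)) => xy; first by rewrite (setIidPr _) ?cards1 // sub1set in_nbhd.
apply/eqP; rewrite cards_eq0; apply/eqP/setP => u.
by rewrite in_setI in_nbhd in_set1 inE; case: eqVneq => [->|]; rewrite ?andbF ?(negbTE xy).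
Qed.

Lemma card_nbhd_set2 x y z : #|nbhd e x :&: [set y; z]| <= e x y + e x z.
Proof. by rewrite setIUr -!card_nbhd_set1 leq_card_setU. Qed.

Lemma card_nbhd2_layer x x' z k : x != x' -> e x z -> e x' z -> z \notin layer k ->
  #|nbhd e x :&: layer k| + #|nbhd e x' :&: layer k| <= #|layer k|.
Proof.
move=> xx' xz x'z zL.
have disj : [disjoint nbhd e x :&: layer k & nbhd e x' :&: layer k].
  apply/pred0P => y /=; apply/negP => /andP[/setIP[/[!in_nbhd] xy yL] /setIP[x'y _]].
  rewrite in_nbhd in x'y.
  by move: zL; rewrite (common_nbhd xx' xz x'z xy x'y) yL.
move: disj; rewrite -(leq_card_setU _ _).2 => /eqP <-.
by rewrite subset_leq_card // -setIUl subsetIr.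
Qed.

Lemma layer_cut2_up i a a' : i < D -> layer i.+1 = [set a; a'] ->
  3 <= #|nbhd e a :&: layer i| + #|nbhd e a' :&: layer i|.
Proof.
move=> iD LA; pose F x := setX (nbhd e x :&: layer i) [set x].
have cardF x : #|F x| = #|nbhd e x :&: layer i| by rewrite cardsX cards1 muln1.
rewrite -!cardF; apply: leq_trans (leq_card_setU (F a) (F a')).
apply: (layer_cut (i := i)) => // x y xL; rewrite LA => /set2P[]-> xy;
  by rewrite in_setU !in_setX /= !set11 !in_setI !in_nbhd !(e_sym _ x) xy xL ?orbT.
Qed.

Lemma layer_cut2_down i b b' : i < D -> layer i = [set b; b'] ->
  3 <= #|nbhd e b :&: layer i.+1| + #|nbhd e b' :&: layer i.+1|.
Proof.
move=> iD LB; pose F x := setX [set x] (nbhd e x :&: layer i.+1).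
have cardF x : #|F x| = #|nbhd e x :&: layer i.+1| by rewrite cardsX cards1 mul1n.
rewrite -!cardF; apply: leq_trans (leq_card_setU (F b) (F b')).
apply: (layer_cut (i := i)) => // x y; rewrite LB => /set2P[]-> yL xy;
  by rewrite in_setU !in_setX /= !set11 !in_setI !in_nbhd xy yL ?orbT.
Qed.

Lemma layer22_config j : j.+2 <= D -> #|layer j.+1| = 2 -> #|layer j.+2| = 2 ->
  exists a a' b b', [/\ layer j.+1 = [set a; a'], layer j.+2 = [set b; b'],
    (a != a') && (b != b'), [&& e a b, e a b' & e a' b] & ~~ e a' b'].
Proof.
move=> jD /eqP/cards2P[a1 [a2 [a12 LA]]] B2.
have nbhdB x : #|nbhd e x :&: layer j.+2| <= 2 by rewrite -B2 subset_leq_card ?subsetIr.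
have cut := layer_cut2_down jD LA.
wlog full : a1 a2 a12 LA cut / #|nbhd e a1 :&: layer j.+2| = 2.
  move=> hwlog; case: (eqVneq #|nbhd e a1 :&: layer j.+2| 2) => [full|a1_part].
    exact: (hwlog a1 a2).
  apply: (hwlog a2 a1); rewrite 1?eq_sym 1?setUC //; first by rewrite addnC.
  by have := nbhdB a1; have := nbhdB a2; lia.
have a1B y : y \in layer j.+2 -> e a1 y.
  have -> : layer j.+2 = nbhd e a1 :&: layer j.+2.
    by apply/esym/eqP; rewrite eqEcard subsetIr full B2.
  by rewrite in_setI in_nbhd => /andP[].
have [b /setIP[/[!in_nbhd] a2b bB]] : exists b, b \in nbhd e a2 :&: layer j.+2.
  by apply/card_gt0P; move: cut; rewrite full; lia.
have [b' bb' LB] : exists2 b', b != b' & layer j.+2 = [set b; b'].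
  move/eqP/cards2P: B2 bB => [c1 [c2 [c12 ->]]] /set2P[]->; first by exists c2.
  by exists c1; rewrite 1?eq_sym // setUC.
have b'B : b' \in layer j.+2 by rewrite LB set22.
exists a1, a2, b, b'; split=> //; first by rewrite a12 bb'.
  by rewrite !a1B.
apply/negP => a2b'; move/negP: bb'; apply; apply/eqP.
exact: (common_nbhd a12 (a1B b bB) a2b (a1B b' b'B) a2b').
Qed.

Section TwoByTwo.
Variables (j : nat) (a a' b b' : T).
Hypothesis jD : j.+3 <= D.

Let j0_lt_D : j < D. Proof. lia. Qed.
Let j1_lt_D : j.+1 < D. Proof. lia. Qed.
Let D_neq1 : D != j.+1. Proof. lia. Qed.
Let D_neq2 : D != j.+2. Proof. lia. Qed.
Let neq20 : j.+2 != j. Proof. lia. Qed.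
Let neq13 : j.+1 != j.+3. Proof. lia. Qed.
Let neq12 : j.+1 != j.+2. Proof. lia. Qed.

Hypotheses (LA : layer j.+1 = [set a; a']) (LB : layer j.+2 = [set b; b']).
Hypotheses (aa' : a != a') (bb' : b != b').
Hypotheses (ab : e a b) (ab' : e a b') (a'b : e a' b) (a'b' : ~~ e a' b').

Let aL : a \in layer j.+1. Proof. by rewrite LA set21. Qed.
Let a'L : a' \in layer j.+1. Proof. by rewrite LA set22. Qed.
Let bL : b \in layer j.+2. Proof. by rewrite LB set21. Qed.
Let b'L : b' \in layer j.+2. Proof. by rewrite LB set22. Qed.

Let below_sum : #|nbhd e a :&: layer j| + #|nbhd e a' :&: layer j| <= #|layer j|.
Proof. exact: card_nbhd2_layer (layer_notin bL neq20). Qed.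

Let above_sum : #|nbhd e b :&: layer j.+3| + #|nbhd e b' :&: layer j.+3| <= #|layer j.+3|.
Proof.
by apply: card_nbhd2_layer (layer_notin aL neq13); rewrite // e_sym.
Qed.

Lemma layer22_below : ~~ e a a' -> 4 <= #|layer j|.
Proof.
move=> naa'.
have a'_below : 2 <= #|nbhd e a' :&: layer j|.
  apply: nbhd_below_ge2; first by apply/eqP; rewrite -in_layer.
  rewrite LA LB; apply: leq_trans (leq_add (card_nbhd_set2 a' a a') (card_nbhd_set2 a' b b')) _.
  by rewrite e_irr (negbTE a'b') (e_sym a' a) (negbTE naa') a'b.
have a_below : 2 <= #|nbhd e a :&: layer j|.
  (* Cut off [ball j] together with [a']: the crossing edges join [layer j] to [a],
     plus the edge [a' b]. *)
  pose F := setX (nbhd e a :&: layer j) [set a] :|: [set (a', b)].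
  suff : 3 <= #|F|.
    by move/leq_trans/(_ (leq_card_setU _ _)); rewrite cardsX !cards1 muln1 addn1.
  apply: (edge_conn_cut e_3conn (S := ball j :|: [set a']) (a := v) (b := w)).
  - by rewrite in_setU in_ball dist_v.
  - rewrite in_setU in_set1 in_ball negb_or -ltnNge j0_lt_D /=.
    by apply: (layer_neq _ a'L D_neq1); rewrite in_layer.
  move=> x y /setUP[xj|/set1P->]; rewrite in_setU in_set1 negb_or => /andP[yj ya'] xy.
    have [xL] := edge_out_ball xy xj yj; rewrite LA => /set2P[]yE; subst y.
      by rewrite /F in_setU in_setX /= set11 andbT in_setI in_nbhd e_sym xy xL.
    by rewrite eqxx in ya'.
  have [|] := edge_out_ball_layer xy a'L yj; rewrite ?LA ?LB => /set2P[]yE; subst y.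
  - by rewrite e_sym xy in naa'.
  - by rewrite eqxx in ya'.
  - by rewrite /F in_setU set11 orbT.
  - by move: a'b'; rewrite xy.
exact: leq_trans (leq_add a_below a'_below) below_sum.
Qed.

Lemma layer22_above : ~~ e b b' -> 4 <= #|layer j.+3|.
Proof.
move=> nbb'.
have b'_above : 2 <= #|nbhd e b' :&: layer j.+3|.
  apply: nbhd_above_ge2; first by apply/eqP; rewrite -in_layer.
  rewrite LA LB; apply: leq_trans (leq_add (card_nbhd_set2 b' a a') (card_nbhd_set2 b' b b')) _.
  by rewrite e_irr (e_sym b' a) ab' (e_sym b' a') (negbTE a'b') (e_sym b' b) (negbTE nbb').
have b_above : 2 <= #|nbhd e b :&: layer j.+3|.
  (* Cut off [ball j.+1] together with [b]: the crossing edges are [a b'] and those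
     joining [b] to [layer j.+3]. *)
  pose F := [set (a, b')] :|: setX [set b] (nbhd e b :&: layer j.+3).
  suff : 3 <= #|F|.
    by move/leq_trans/(_ (leq_card_setU _ _)); rewrite cardsX !cards1 mul1n add1n.
  apply: (edge_conn_cut e_3conn (S := ball j.+1 :|: [set b]) (a := v) (b := w)).
  - by rewrite in_setU in_ball dist_v.
  - rewrite in_setU in_set1 in_ball negb_or -ltnNge j1_lt_D /=.
    by apply: (layer_neq _ bL D_neq2); rewrite in_layer.
  move=> x y /setUP[xj|/set1P->]; rewrite in_setU in_set1 negb_or => /andP[yj yb] xy.
    have [] := edge_out_ball xy xj yj; rewrite LA LB => /set2P[]xE /set2P[]yE; subst x y.
    - by rewrite eqxx in yb.
    - by rewrite /F in_setU set11.
    - by rewrite eqxx in yb.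
    - by move: a'b'; rewrite xy.
  have [|yL] := edge_out_ball_layer xy bL yj.
    by rewrite LB => /set2P[]yE; subst y; [rewrite eqxx in yb | rewrite xy in nbb'].
  by rewrite /F in_setU in_setX /= set11 in_setI in_nbhd xy yL orbT.
exact: leq_trans (leq_add b_above b'_above) above_sum.
Qed.

Lemma layer22_adjacent : ~ (e a a' /\ e b b').
Proof.
case=> aa'E bb'E; have /eqP := layer_neq a'L b'L neq12; apply.
by apply: (common_nbhd (layer_neq aL bL neq12)); rewrite // e_sym.
Qed.

Lemma layer22_sum : 7 <= #|layer j| + #|layer j.+3|.
Proof.
have below3 : 3 <= #|layer j|.
  exact: leq_trans (layer_cut2_up j0_lt_D LA) below_sum.
have above3 : 3 <= #|layer j.+3|.
  exact: leq_trans (layer_cut2_down jD LB) above_sum.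
case: (boolP (e a a')) => [aa'E|naa']; last exact: leq_add (layer22_below naa') above3.
have nbb' : ~~ e b b' by apply/negP => bb'E; apply: layer22_adjacent.
exact: leq_add below3 (layer22_above nbb').
Qed.

End TwoByTwo.

Lemma layer22 j : j.+3 <= D -> #|layer j.+1| = 2 -> #|layer j.+2| = 2 ->
  7 <= #|layer j| + #|layer j.+3|.
Proof.
move=> jD A2 B2; have [a [a' [b [b' [LA LB]]]]] := layer22_config (ltnW jD) A2 B2.
by case/andP=> aa' bb' /and3P[ab ab' a'b] a'b'; apply: (layer22_sum jD LA LB).
Qed.

Lemma layer_profile : admissible_profile (fun i => #|layer i|) D.
Proof.
split.
- by rewrite layer0 cards1.
- exact: card_layer_gt0.
- exact: card_layer_mul.
- exact: layer_after_single.
- exact: layer_before_single.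
- exact: layer22.
Qed.

Lemma eccentricity_bound : 5 * D + 3 <= 2 * #|T|.
Proof.
rewrite -sum_card_layer; apply: admissible_profile_sum layer_profile _.
have [z zv] : exists z, z != v.
  have /card_gt1P[x [y [_ _ xy]]] := e_3conn.1.
  by case: (eqVneq x v) => [xv|]; [exists y; rewrite -xv eq_sym | exists x].
by apply: leq_trans (w_far z); rewrite lt0n dist_eq0.
Qed.

End Layers.

Lemma diameter_attained (T : finType) (e : rel T) : 0 < #|T| ->
  exists w v, diameter e = dist e w v /\ forall x, dist e x v <= diameter e.
Proof.
move=> T_gt0; have [w Dw] := eq_bigmax (fun x => \max_y dist e x y) T_gt0.
have [v Dwv] := eq_bigmax (dist e w) T_gt0.
exists w, v; rewrite /diameter; split=> [|x]; first by rewrite Dw Dwv.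
exact: leq_trans (leq_bigmax (F := dist e x) v) (leq_bigmax (F := fun x => \max_y dist e x y) x).
Qed.

Import GRing.Theory Num.Theory.
Local Open Scope ring_scope.

Theorem theorem1 (T : finType) (e : rel T) :
  simple_graph e -> connected_graph e -> C4_free e -> edge_conn_ge e 3 ->
  ((diameter e)%:R : rat) <= (2 * (#|T|)%:R - 3) / 5.
Proof.
move=> [e_sym e_irr] e_conn e_C4 e_3conn.
have [w [v [diam w_far]]] := diameter_attained e (ltnW e_3conn.1).
rewrite diam in w_far.
have := eccentricity_bound e_sym e_irr e_conn e_C4 e_3conn w_far.
rewrite -diam -(ler_nat rat) natrD !natrM => bound.
by rewrite ler_pdivlMr //; lra.
Qed.
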